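(* Let $d,n\in\mathbb N$ with $n\ge 2$, $Q,K\in\mathbb R^{d\times d}$, $V:=I_d$, and $A:=K^\top Q/\sqrt d$. Assume $A$ has at least one real eigenvalue, and let $\gamma_1\ge\dots\ge\gamma_\delta$ be the real eigenvalues of $A$. Set $\gamma:=\max(-\gamma_\delta,\gamma_1/8)$. Then for every $R>0$, the self-attention map $f$ with parameters $(A,V)$ satisfies $$\mathrm{Lip}\big(f_{|B_R^n}\big)\ge\frac{\sqrt{n-1}}{1+(n-1)e^{-2R^2\gamma}}.$$
   Context: For $X=(x_1,\dots,x_n)\in(\mathbb R^d)^n$, self-attention with parameters $(A,V)$ is $f(X)=\big(V\sum_{j=1}^nP_{ij}x_j\big)_{1\le i\le n}$, where $P_{ij}=\exp(x_i^\top A^\top x_j)/\sum_{l=1}^n\exp(x_i^\top A^\top x_l)$. $(\mathbb R^d)^n$ carries the Frobenius norm $\|X\|_F=(\sum_i|x_i|^2)^{1/2}$. $B_R\subset\mathbb R^d$ is the closed Euclidean ball of center $0$ and radius $R$, and $\mathrm{Lip}(f_{|\mathcal X})=\sup_{X\ne Y\in\mathcal X}\|f(X)-f(Y)\|_F/\|X-Y\|_F$. *)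

From HB Require Import structures.
From mathcomp Require Import all_boot all_order all_algebra.
From mathcomp Require Import all_classical all_reals all_analysis.
Set Implicit Arguments. Unset Strict Implicit. Unset Printing Implicit Defensive.
Import Order.TTheory GRing.Theory Num.Theory.
Local Open Scope classical_set_scope.
Local Open Scope ring_scope.

(* A configuration X = (x_1,...,x_n) in (R^d)^n is an n x d matrix whose
   i-th row is x_i (as a row vector). *)

(* score i j = x_i^T A^T x_j  (column convention), i.e. x_i A^T x_j^T in rows *)
Definition att_score (R : realType) (n d : nat) (A : 'M[R]_d)
  (X : 'M[R]_(n, d)) (i j : 'I_n) : R :=
  (row i X *m A^T *m (row j X)^T) 0 0.

Definition att_P (R : realType) (n d : nat) (A : 'M[R]_d)
  (X : 'M[R]_(n, d)) (i j : 'I_n) : R :=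
  expR (att_score A X i j) / \sum_(l < n) expR (att_score A X i l).

(* f(X)_i = V (sum_j P_ij x_j); as a row vector: (sum_j P_ij x_j) V^T *)
Definition self_attention (R : realType) (n d : nat) (A V : 'M[R]_d)
  (X : 'M[R]_(n, d)) : 'M[R]_(n, d) :=
  \matrix_(i < n) ((\sum_(j < n) att_P A X i j *: row j X) *m V^T).

Definition frob (R : realType) (n d : nat) (X : 'M[R]_(n, d)) : R :=
  Num.sqrt (\sum_(i < n) \sum_(k < d) X i k ^+ 2).

Definition eucl (R : realType) (d : nat) (x : 'rV[R]_d) : R :=
  Num.sqrt (\sum_(k < d) x 0 k ^+ 2).

Definition ballR_n (R : realType) (n d : nat) (r : R) : set 'M[R]_(n, d) :=
  [set X | forall i : 'I_n, eucl (row i X) <= r].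

Definition Lip_on (R : realType) (n d : nat)
  (f : 'M[R]_(n, d) -> 'M[R]_(n, d)) (S : set 'M[R]_(n, d)) : \bar R :=
  ereal_sup [set e : \bar R | exists X Y, S X /\ S Y /\ X <> Y /\
     e = (frob (f X - f Y) / frob (X - Y))%:E].

From HB Require Import structures.
From mathcomp Require Import all_boot all_order all_algebra.
From mathcomp Require Import all_classical all_reals all_analysis.
From mathcomp.algebra_tactics Require Import ring lra.

Set Implicit Arguments.
Unset Strict Implicit.
Unset Printing Implicit Defensive.
Import Order.TTheory GRing.Theory Num.Theory.
Local Open Scope ring_scope.

(* Put all n points on the line spanned by a unit row vector u with
   u A = lam u.  The scores become lam s_i s_j and self-attention (with V = I)
   maps the line configuration with coefficients s to another one.  Compare the
   constant configuration s = b, a fixed point, with the one where a single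
   point is moved to a: each of the other n - 1 points then moves by w (a - b),
   where w = 1 / (1 + (n - 1) exp (lam b (b - a))) is the weight it puts on the
   moved point, while the input moved by |a - b|.  So Lip >= sqrt (n - 1) w, and
   lam = gamma_1, (a, b) = (r, r/2) or lam = gamma_delta, (a, b) = (-r, r) give
   lam b (b - a) = - 2 r^2 gamma in the two cases of the maximum. *)

Lemma att_P_sum1 (R : realType) (n d : nat) (A : 'M[R]_d) (X : 'M[R]_(n, d))
    (i : 'I_n) :
  \sum_j att_P A X i j = 1.
Proof.
rewrite /att_P -mulr_suml mulfV // gt_eqF // (bigD1 i) //=.
by rewrite ltr_pwDl ?expR_gt0 // sumr_ge0 // => l _; rewrite expR_ge0.
Qed.

Lemma frob0 (R : realType) (n d : nat) : frob (0 : 'M[R]_(n, d)) = 0.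
Proof.
by rewrite /frob big1 ?sqrtr0 // => i _; rewrite big1 // => k _; rewrite mxE expr0n.
Qed.

Lemma Lip_on_ge (R : realType) (n d : nat) (f : 'M[R]_(n, d) -> 'M[R]_(n, d))
    (S : set 'M[R]_(n, d)) (X Y : 'M[R]_(n, d)) (c : R) :
  S X -> S Y -> 0 < frob (X - Y) -> c * frob (X - Y) <= frob (f X - f Y) ->
  (c%:E <= Lip_on f S)%E.
Proof.
move=> SX SY XY_gt0 le_cf.
apply: (@le_trans _ _ (frob (f X - f Y) / frob (X - Y))%:E).
  by rewrite lee_fin ler_pdivlMr.
apply: ereal_sup_ubound; exists X, Y; do 3!split=> //.
by move=> eXY; move: XY_gt0; rewrite eXY subrr frob0 ltxx.
Qed.

Lemma eigenvalue_unit_row (R : realType) (d : nat) (A : 'M[R]_d) (lam : R) :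
  eigenvalue A lam ->
  exists2 u : 'rV[R]_d, u *m A = lam *: u & \sum_(k < d) u 0 k ^+ 2 = 1.
Proof.
move=> /eigenvalueP [v v_eigen v_neq0].
set c := \sum_(k < d) v 0 k ^+ 2.
have c_gt0 : 0 < c.
  rewrite lt0r sumr_ge0 ?andbT => [|k _]; last exact: sqr_ge0.
  apply: contra v_neq0 => /eqP /psumr_eq0P v0; apply/eqP/rowP => k.
  by rewrite mxE; apply/eqP; rewrite -sqrf_eq0 v0 // => j _; apply: sqr_ge0.
exists ((Num.sqrt c)^-1 *: v); first by rewrite -scalemxAl v_eigen !scalerA mulrC.
rewrite (eq_bigr (fun k => (Num.sqrt c)^-2 * v 0 k ^+ 2)) => [|k _]; last first.
  by rewrite mxE exprMn exprVn.
by rewrite -mulr_sumr sqr_sqrtr ?ltW // mulVf // gt_eqF.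
Qed.

Section EigenLine.
Variables (R : realType) (n d : nat) (A : 'M[R]_d) (lam : R) (u : 'rV[R]_d).
Hypotheses (u_eigen : u *m A = lam *: u) (u_unit : \sum_(k < d) u 0 k ^+ 2 = 1).

Definition line_cfg (s : 'I_n -> R) : 'M[R]_(n, d) := \matrix_(i, k) (s i * u 0 k).

Lemma row_line_cfg s i : row i (line_cfg s) = s i *: u.
Proof. by apply/rowP => k; rewrite !mxE. Qed.

Lemma line_cfgB s t : line_cfg s - line_cfg t = line_cfg (fun i => s i - t i).
Proof. by apply/matrixP => i k; rewrite !mxE mulrBl. Qed.

Lemma sum_sqr_scale_unit (c : R) : \sum_(k < d) (c * u 0 k) ^+ 2 = c ^+ 2.
Proof.
under eq_bigr do rewrite exprMn.
by rewrite -mulr_sumr u_unit mulr1.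
Qed.

Lemma eucl_row_line_cfg s i : eucl (row i (line_cfg s)) = `|s i|.
Proof.
rewrite /eucl -sqrtr_sqr -(sum_sqr_scale_unit (s i)); congr Num.sqrt.
by apply: eq_bigr => k _; rewrite row_line_cfg !mxE.
Qed.

Lemma frob_line_cfg s : frob (line_cfg s) = Num.sqrt (\sum_i s i ^+ 2).
Proof.
rewrite /frob; congr Num.sqrt; apply: eq_bigr => i _.
by rewrite -sum_sqr_scale_unit; apply: eq_bigr => k _; rewrite mxE.
Qed.

(* Transposing the scalar u A^T u^T exposes the eigenvector equation. *)
Lemma eigen_quad_form : (u *m A^T *m u^T) 0 0 = lam.
Proof.
have -> : (u *m A^T *m u^T) 0 0 = (u *m A^T *m u^T)^T 0 0 by rewrite [RHS]mxE.
rewrite !trmx_mul !trmxK mulmxA u_eigen.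
rewrite -scalemxAl mxE mxE -[RHS]mulr1 -u_unit; congr (_ * _).
by apply: eq_bigr => k _; rewrite mxE expr2.
Qed.

Lemma att_score_line_cfg s i j : att_score A (line_cfg s) i j = lam * s i * s j.
Proof.
rewrite /att_score !row_line_cfg -scalemxAl linearZ /= -scalemxAr -scalemxAl.
by rewrite scalerA mxE eigen_quad_form; ring.
Qed.

Lemma self_attention_line_cfg s :
  self_attention A 1%:M (line_cfg s) =
  line_cfg (fun i => \sum_j att_P A (line_cfg s) i j * s j).
Proof.
apply/matrixP => i k; rewrite /self_attention mxE trmx1 mulmx1 summxE mxE.
by rewrite mulr_suml; apply: eq_bigr => j _; rewrite !mxE mulrA.
Qed.

Variables (a b : R) (i1 : 'I_n).

Definition spike (i : 'I_n) : R := if i == i1 then a else b.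

Definition spike_weight : R := (1 + n.-1%:R * expR (lam * b * (b - a)))^-1.

Lemma spike_weight_gt0 : 0 < spike_weight.
Proof. by rewrite invr_gt0 ltr_pwDl // mulr_ge0 ?expR_ge0. Qed.

Lemma att_P_spike i : i != i1 -> att_P A (line_cfg spike) i i1 = spike_weight.
Proof.
move=> ne_i; rewrite /att_P (bigD1 i1) //= !att_score_line_cfg /spike.
rewrite (negbTE ne_i) eqxx (eq_bigr (fun=> expR (lam * b * b))) => [|l ne_l].
  rewrite sumr_const cardC1 card_ord -mulr_natr /spike_weight mulrBr expRB.
  have := expR_gt0 (lam * b * a); have := expR_gt0 (lam * b * b).
  set Ea := expR (lam * b * a); set Eb := expR (lam * b * b) => Eb_gt0 Ea_gt0.
  by field; rewrite !gt_eqF // ltr_wpDr // mulr_ge0 // ltW.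
by rewrite att_score_line_cfg /spike (negbTE ne_i) (negbTE ne_l).
Qed.

Lemma att_avg_spike i : i != i1 ->
  \sum_j att_P A (line_cfg spike) i j * spike j = b + spike_weight * (a - b).
Proof.
move=> ne_i; have shift j : spike j = b + (spike j - b) by rewrite addrC subrK.
under eq_bigr do rewrite shift mulrDr.
rewrite big_split /= -mulr_suml att_P_sum1 mul1r (bigD1 i1) //= big1 => [|j ne_j].
  by rewrite addr0 att_P_spike // /spike eqxx.
by rewrite /spike (negbTE ne_j) subrr mulr0.
Qed.

Lemma att_avg_const i : \sum_j att_P A (line_cfg (fun=> b)) i j * b = b.
Proof. by rewrite -mulr_suml att_P_sum1 mul1r. Qed.

Lemma Lip_on_ge_spike (r : R) : a != b -> `|a| <= r -> `|b| <= r ->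
  ((Num.sqrt n.-1%:R * spike_weight)%:E
    <= Lip_on (self_attention A 1%:M) (@ballR_n R n d r))%E.
Proof.
move=> ne_ab a_le b_le.
have dist_ab : frob (line_cfg spike - line_cfg (fun=> b)) = `|a - b|.
  rewrite line_cfgB frob_line_cfg (bigD1 i1) //= big1 => [|i ne_i].
    by rewrite addr0 /spike eqxx sqrtr_sqr.
  by rewrite /spike (negbTE ne_i) subrr expr0n.
apply: (@Lip_on_ge _ _ _ _ _ (line_cfg spike) (line_cfg (fun=> b))).
- by move=> i; rewrite eucl_row_line_cfg /spike; case: ifP.
- by move=> i; rewrite eucl_row_line_cfg.
- by rewrite dist_ab normr_gt0 subr_eq0.
rewrite dist_ab !self_attention_line_cfg line_cfgB frob_line_cfg.
have -> : Num.sqrt n.-1%:R * spike_weight * `|a - b|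
          = Num.sqrt (n.-1%:R * (spike_weight * (a - b)) ^+ 2).
  by rewrite sqrtrM // sqrtr_sqr normrM (gtr0_norm spike_weight_gt0) mulrA.
rewrite ler_sqrt ?sumr_ge0 // => [|i _]; last exact: sqr_ge0.
rewrite [leRHS](bigD1 i1) //=.
rewrite [X in _ <= _ + X](eq_bigr (fun=> (spike_weight * (a - b)) ^+ 2)) => [|i ne_i].
  by rewrite sumr_const cardC1 card_ord mulr_natl lerDr sqr_ge0.
by rewrite att_avg_spike // att_avg_const addrAC subrr add0r.
Qed.

End EigenLine.

Theorem mainTheorem2 (R : realType) (d n : nat) (Q K : 'M[R]_d)
  (gamma1 gammad : R) :
  (2 <= n)%N ->
  let A := (Num.sqrt (d%:R : R))^-1 *: (K^T *m Q) in
  eigenvalue A gamma1 -> eigenvalue A gammad ->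
  (forall a : R, eigenvalue A a -> gammad <= a <= gamma1) ->
  let gamma := Num.max (- gammad) (gamma1 / 8) in
  forall r : R, 0 < r ->
  ((Num.sqrt ((n - 1)%N%:R : R) /
      (1 + (n - 1)%N%:R * expR (- (2 * r ^+ 2 * gamma))))%:E
   <= Lip_on (@self_attention R n d A 1%:M) (@ballR_n R n d r))%E.
Proof.
move=> n_ge2 A gamma1_eig gammad_eig _ gamma r r_gt0.
pose i1 : 'I_n := Ordinal (ltn_trans (ltnSn 0) n_ge2).
have r_norm : `|r| <= r by rewrite (ger0_norm (ltW r_gt0)).
rewrite /gamma subn1; case: (leP (- gammad) (gamma1 / 8)) => _.
- have [u u_eigen u_unit] := eigenvalue_unit_row gamma1_eig.
  have -> : - (2 * r ^+ 2 * (gamma1 / 8)) = gamma1 * (r / 2) * (r / 2 - r).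
    by rewrite expr2; field.
  apply: (Lip_on_ge_spike (a := r) (b := r / 2) u_eigen u_unit i1) => //.
    by rewrite gt_eqF //; lra.
  by rewrite ger0_norm; lra.
- have [u u_eigen u_unit] := eigenvalue_unit_row gammad_eig.
  have -> : - (2 * r ^+ 2 * - gammad) = gammad * r * (r - - r).
    by rewrite expr2; ring.
  apply: (Lip_on_ge_spike (a := - r) (b := r) u_eigen u_unit i1); rewrite ?normrN //.
  by rewrite lt_eqF //; lra.
Qed.
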